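(* Let $\mathcal{P}$ be a probability distribution over $\Omega=\mathcal{X}\times\mathcal{Y}\times[K]$, and let $\hat z:\mathcal{X}\to J$ be a proxy with finite range $J$, where every $j\in J$ has $\hat r_j:=\Pr_{(x,y,z)\sim\mathcal{P}}[\hat z(x)=j]>0$. For $j\in J$ let $a_j\in\mathbb{R}^K$ be the row vector with entries $a_{j,i}=\Pr_{(x,y,z)\sim\mathcal{P}}[z=i\mid \hat z(x)=j]$, and let $A$ be the $|J|\times K$ matrix with rows $a_j$. Let $U=(1/K,\dots,1/K)$. Let $q$ be any minimizer of $\lVert qA-U\rVert_2$ over stochastic row vectors $q\in\mathbb{R}^{|J|}$ (i.e. $q_j\ge 0$, $\sum_j q_j=1$), set $\rho_j=q_j/\hat r_j$, and normalize $\rho_j\leftarrow\rho_j/\max_{j'}\rho_{j'}$. Consider the sampling procedure: draw $(x,y,z)\sim\mathcal{P}$ (with $z$ unobserved), compute $\hat z(x)$, and accept the sample with probability $\rho_{\hat z(x)}$. If $U\in C(A)$, then the distribution of the protected attribute $z$ among accepted samples is uniform, i.e. $\Pr[z=i\mid \text{accepted}]=1/K$ for all $i\in[K]$.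
   Context: $C(A)$ denotes the convex hull of the rows of $A$, i.e. $\{\sum_j q_j a_j: q_j\ge 0,\ \sum_j q_j=1\}$. Here $x$ is the feature vector (excluding the sensitive attribute), $y\in\{0,1\}$ the label, and $z\in[K]$ the sensitive group. *)

From HB Require Import structures.
From mathcomp Require Import all_boot all_order all_algebra.
From mathcomp Require Import all_classical all_reals all_analysis.
Set Implicit Arguments. Unset Strict Implicit. Unset Printing Implicit Defensive.
Import Order.TTheory GRing.Theory Num.Theory.
Local Open Scope classical_set_scope.
Local Open Scope ring_scope.

Section ProxyRejection.
Context {d : measure_display} {Om : measurableType d} {R : realType}.
Variable P : probability Om R.
Variables (X Y : Type) (K : nat) (J : finType).
Variables (xv : Om -> X) (yv : Om -> Y) (zv : Om -> 'I_K) (zhat : X -> J).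

Definition prob (E : set Om) : R := fine (P E).

Definition rhat (j : J) : R := prob [set w | zhat (xv w) = j].

Definition pjoint (j : J) (i : 'I_K) : R :=
  prob [set w | zhat (xv w) = j /\ zv w = i].

Definition amat (j : J) (i : 'I_K) : R := pjoint j i / rhat j.

Definition stochastic (q : J -> R) : Prop :=
  (forall j, 0 <= q j) /\ \sum_j q j = 1.

Definition qA (q : J -> R) (i : 'I_K) : R := \sum_j q j * amat j i.

Definition Uvec (i : 'I_K) : R := (K%:R)^-1.

Definition dist2 (q : J -> R) : R := Num.sqrt (\sum_i (qA q i - Uvec i) ^+ 2).

(* U \in C(A), the convex hull of the rows of A *)
Definition U_in_hull : Prop :=
  exists q : J -> R, stochastic q /\ forall i, qA q i = Uvec i.

Definition is_minimizer (q : J -> R) : Prop :=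
  stochastic q /\ forall q' : J -> R, stochastic q' -> dist2 q <= dist2 q'.

Definition rho (q : J -> R) (j : J) : R := q j / rhat j.
Definition rho_max (q : J -> R) : R := \big[Num.max/0]_j rho q j.
Definition rho_n (q : J -> R) (j : J) : R := rho q j / rho_max q.

(* Pr[z = i and accepted] for the procedure: draw w ~ P, accept with
   probability rho_n (zhat (x w)); equals E[1{z=i} * rho_n(zhat x)]. *)
Definition accept_joint (q : J -> R) (i : 'I_K) : R :=
  \sum_j rho_n q j * pjoint j i.
Definition accept_prob (q : J -> R) : R := \sum_i accept_joint q i.
Definition accept_cond (q : J -> R) (i : 'I_K) : R :=
  accept_joint q i / accept_prob q.

End ProxyRejection.

From HB Require Import structures.
From mathcomp Require Import all_boot all_order all_algebra.
From mathcomp Require Import all_classical all_reals all_analysis.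
From mathcomp Require Import ring.
Import Order.TTheory GRing.Theory Num.Theory.
Local Open Scope classical_set_scope.
Local Open Scope ring_scope.

Set Implicit Arguments.
Unset Strict Implicit.
Unset Printing Implicit Defensive.

(* Since U lies in C(A), the minimal distance is 0, so any minimizer q solves
   qA = U exactly.  Accepting with probability rho_n gives
   Pr[z = i, accepted] = sum_j q_j a_{j,i} / max rho = (qA)_i / max rho,
   which is proportional to U_i; normalizing by Pr[accepted] yields 1/K. *)

Lemma sqrt_sum_sqr_eq0 (R : rcfType) (I : finType) (f : I -> R) :
  Num.sqrt (\sum_i f i ^+ 2) = 0 -> forall i, f i = 0.
Proof.
move=> /eqP; rewrite sqrtr_eq0 => sum_le0 i; apply/eqP; rewrite -sqrf_eq0.
have sum_eq0 : \sum_k f k ^+ 2 = 0.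
  by apply/eqP; rewrite eq_le sum_le0 sumr_ge0 // => k _; apply: sqr_ge0.
by rewrite (psumr_eq0P (fun k _ => sqr_ge0 (f k)) sum_eq0).
Qed.

Lemma sum_eq1_exists_gt0 (R : numDomainType) (I : finType) (q : I -> R) :
  (forall j, 0 <= q j) -> \sum_j q j = 1 -> exists j, 0 < q j.
Proof.
move=> q_ge0 sum_q; apply/existsP; apply: contraT; rewrite negb_exists.
move=> /forallP q_le0; move: sum_q; rewrite big1 => [/eqP|j _].
  by rewrite eq_sym oner_eq0.
by apply/eqP; move: (q_le0 j); rewrite lt0r q_ge0 andbT negbK.
Qed.

Section ProxyRejection.
Context {d : measure_display} {Om : measurableType d} {R : realType}.
Variable P : probability Om R.
Variables (X : Type) (K : nat) (J : finType).
Variables (xv : Om -> X) (zv : Om -> 'I_K) (zhat : X -> J).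
Hypothesis rhat_gt0 : forall j, 0 < rhat P xv zhat j.

Lemma dist2_eq0 (q : J -> R) :
  dist2 P xv zv zhat q = 0 -> forall i, qA P xv zv zhat q i = Uvec i.
Proof.
by move=> /sqrt_sum_sqr_eq0 qA_U i; apply/eqP; rewrite -subr_eq0 qA_U.
Qed.

Lemma minimizer_qA_eqU (q : J -> R) :
  U_in_hull P xv zv zhat -> is_minimizer P xv zv zhat q ->
  forall i, qA P xv zv zhat q i = Uvec i.
Proof.
move=> [q0 [q0_stoch q0A_U]] [_ q_min]; apply: dist2_eq0.
have dist_q0 : dist2 P xv zv zhat q0 = 0.
  by rewrite /dist2 big1 ?sqrtr0 // => i _; rewrite q0A_U subrr expr0n.
by apply/eqP; rewrite eq_le sqrtr_ge0 andbT -dist_q0 (q_min _ q0_stoch).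
Qed.

Lemma rho_max_gt0 (q : J -> R) : stochastic q -> 0 < rho_max P xv zhat q.
Proof.
move=> [q_ge0 sum_q]; have [j q_j_gt0] := sum_eq1_exists_gt0 q_ge0 sum_q.
apply: (lt_le_trans _ (le_bigmax _ _ j)).
by rewrite /rho divr_gt0.
Qed.

Lemma accept_jointE (q : J -> R) i :
  accept_joint P xv zv zhat q i = qA P xv zv zhat q i / rho_max P xv zhat q.
Proof.
rewrite /accept_joint /qA mulr_suml; apply: eq_bigr => j _.
by rewrite /rho_n /rho /amat; ring.
Qed.

Lemma accept_condE (q : J -> R) i : stochastic q ->
  accept_cond P xv zv zhat q i =
  qA P xv zv zhat q i / \sum_k qA P xv zv zhat q k.
Proof.
move=> /rho_max_gt0 /lt0r_neq0 M_neq0.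
rewrite /accept_cond /accept_prob accept_jointE.
under eq_bigr do rewrite accept_jointE.
by rewrite -mulr_suml invfM mulrACA divff ?invr_eq0 // mulr1.
Qed.

End ProxyRejection.

Theorem lemma2 (d : measure_display) (Om : measurableType d) (R : realType)
  (P : probability Om R) (X Y : Type) (K : nat) (J : finType)
  (xv : Om -> X) (yv : Om -> Y) (zv : Om -> 'I_K) (zhat : X -> J)
  (Hmeas : forall (j : J) (i : 'I_K),
      measurable [set w | zhat (xv w) = j /\ zv w = i])
  (Hrpos : forall j : J, 0 < rhat P xv zhat j)
  (q : J -> R)
  (Hq : is_minimizer P xv zv zhat q)
  (HU : U_in_hull P xv zv zhat) :
  forall i : 'I_K, accept_cond P xv zv zhat q i = (K%:R)^-1.
Proof.
move=> i; have K_neq0 : (K%:R : R) != 0 by rewrite pnatr_eq0; case: (K) i => [[]|].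
rewrite (accept_condE zv Hrpos i Hq.1).
under eq_bigr do rewrite (minimizer_qA_eqU HU Hq).
rewrite minimizer_qA_eqU // /Uvec sumr_const card_ord.
by rewrite -[_^-1 *+ K]mulr_natr mulVf // invr1 mulr1.
Qed.
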